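(* Let $X$ be a proper $\mathrm{CAT}(0)$ space, and let $G$ be a group acting by isometries on $X$. Let $(g_n)_{n\in\mathbb N}$ be a sequence in $G$ that escapes every compact subspace of $X$. Then there exist a subsequence $(g_{\sigma(n)})_{n\in\mathbb N}$ and points $\xi^-,\xi^+\in\partial_\infty X$ such that for every $\xi\in(\partial_\infty X)^{\mathrm{vis}}\setminus\{\xi^-\}$, the sequence $(g_{\sigma(n)}\xi)_{n\in\mathbb N}$ converges to $\xi^+$.
   Context: $\partial_\infty X$ is the visual boundary with the visual topology. $(\partial_\infty X)^{\mathrm{vis}}$ is the set of visibility points: points $\xi\in\partial_\infty X$ such that every $\eta\in\partial_\infty X$ with $\eta\neq\xi$ can be joined to $\xi$ by a geodesic line in $X$. A sequence $(g_n)$ escapes every compact subspace of $X$ if for some (equivalently any) $x\in X$, $(g_nx)$ eventually leaves every compact subset of $X$. *)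

From Stdlib Require Import Reals Lra.
Open Scope R_scope.

Definition is_metric {X : Type} (d : X -> X -> R) : Prop :=
  (forall x y, d x y = 0 <-> x = y) /\
  (forall x y, d x y = d y x) /\
  (forall x y z, d x z <= d x y + d y z).

Definition mopen {X : Type} (d : X -> X -> R) (U : X -> Prop) : Prop :=
  forall x, U x -> exists r, 0 < r /\ forall y, d x y < r -> U y.

Definition mcompact {X : Type} (d : X -> X -> R) (K : X -> Prop) : Prop :=
  forall (I : Type) (U : I -> X -> Prop),
    (forall i, mopen d (U i)) ->
    (forall x, K x -> exists i, U i x) ->
    exists l : list I, forall x, K x -> exists i, List.In i l /\ U i x.

Definition proper_space {X : Type} (d : X -> X -> R) : Prop :=
  forall x r, mcompact d (fun y => d x y <= r).

Definition geod_seg {X : Type} (d : X -> X -> R) (c : R -> X) (p q : X) : Prop :=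
  c 0 = p /\ c (d p q) = q /\
  forall s t, 0 <= s <= d p q -> 0 <= t <= d p q -> d (c s) (c t) = Rabs (s - t).

Definition geodesic_space {X : Type} (d : X -> X -> R) : Prop :=
  forall p q, exists c, geod_seg d c p q.

Definition E2 := (R * R)%type.
Definition dE (P Q : E2) : R :=
  sqrt ((fst P - fst Q)^2 + (snd P - snd Q)^2).
(* The point of the Euclidean segment [P,Q] at distance s from P,
   where a = |P - Q| (if a = 0 this is P). *)
Definition segE (P Q : E2) (a s : R) : E2 :=
  (fst P + (s / a) * (fst Q - fst P), snd P + (s / a) * (snd Q - snd P)).

(* x is the point of the side c (from p to q) at parameter s, and xb is
   the corresponding point of the comparison side [P,Q]. *)
Definition side_pt {X : Type} (d : X -> X -> R) (c : R -> X) (p q : X)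
  (P Q : E2) (x : X) (xb : E2) : Prop :=
  exists s, 0 <= s <= d p q /\ x = c s /\ xb = segE P Q (d p q) s.

Definition CAT0_ineq {X : Type} (d : X -> X -> R) : Prop :=
  forall (p q r : X) (c1 c2 c3 : R -> X),
    geod_seg d c1 p q -> geod_seg d c2 q r -> geod_seg d c3 r p ->
    forall P Q Rr : E2,
      dE P Q = d p q -> dE Q Rr = d q r -> dE Rr P = d r p ->
      forall x y xb yb,
        (side_pt d c1 p q P Q x xb \/ side_pt d c2 q r Q Rr x xb \/
         side_pt d c3 r p Rr P x xb) ->
        (side_pt d c1 p q P Q y yb \/ side_pt d c2 q r Q Rr y yb \/
         side_pt d c3 r p Rr P y yb) ->
        d x y <= dE xb yb.

Definition CAT0_space {X : Type} (d : X -> X -> R) : Prop :=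
  is_metric d /\ geodesic_space d /\ CAT0_ineq d.

(** * Visual boundary: points are represented by geodesic rays,
    two rays representing the same point iff they are asymptotic. *)
Definition geod_ray {X : Type} (d : X -> X -> R) (c : R -> X) : Prop :=
  forall s t, 0 <= s -> 0 <= t -> d (c s) (c t) = Rabs (s - t).

Definition asymptotic {X : Type} (d : X -> X -> R) (c c' : R -> X) : Prop :=
  exists B, forall t, 0 <= t -> d (c t) (c' t) <= B.

Definition geod_line {X : Type} (d : X -> X -> R) (l : R -> X) : Prop :=
  forall s t, d (l s) (l t) = Rabs (s - t).

Definition visibility_pt {X : Type} (d : X -> X -> R) (xi : R -> X) : Prop :=
  forall eta, geod_ray d eta -> ~ asymptotic d eta xi ->
    exists l, geod_line d l /\
      asymptotic d (fun t => l t) xi /\ asymptotic d (fun t => l (- t)) eta.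

(* Convergence in the visual (cone) topology of a sequence of boundary points
   xs n to xi: for a basepoint x0, the basic neighbourhoods of xi are
   U(c, Rad, eps) = {eta | d(c_eta Rad, c Rad) < eps}, where c, c_eta are
   the rays from x0 representing xi, eta. (Topology independent of x0.) *)
Definition vis_conv {X : Type} (d : X -> X -> R)
  (xs : nat -> R -> X) (xi : R -> X) : Prop :=
  forall x0 Rad eps, 0 <= Rad -> 0 < eps ->
    exists N, forall n, (N <= n)%nat ->
      forall c c', geod_ray d c -> c 0 = x0 -> asymptotic d c (xs n) ->
                   geod_ray d c' -> c' 0 = x0 -> asymptotic d c' xi ->
                   d (c Rad) (c' Rad) < eps.

Definition is_group {G : Type} (mul : G -> G -> G) (e : G) (inv : G -> G) : Prop :=
  (forall a b c, mul a (mul b c) = mul (mul a b) c) /\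
  (forall a, mul e a = a /\ mul a e = a) /\
  (forall a, mul (inv a) a = e /\ mul a (inv a) = e).

Definition isometric_action {G X : Type} (mul : G -> G -> G) (e : G)
  (d : X -> X -> R) (act : G -> X -> X) : Prop :=
  (forall x, act e x = x) /\
  (forall g h x, act (mul g h) x = act g (act h x)) /\
  (forall g x y, d (act g x) (act g y) = d x y).

Definition escapes_compacts {G X : Type} (d : X -> X -> R) (act : G -> X -> X)
  (g : nat -> G) : Prop :=
  exists x, forall K, mcompact d K ->
    exists N, forall n, (N <= n)%nat -> ~ K (act (g n) x).

From Stdlib Require Import List Reals Lra Lia Psatz Classical ClassicalEpsilon.
Open Scope R_scope.

(* Fix a basepoint x. The orbit g_n x leaves every ball, so by properness and a diagonal
   argument the segments [x, g_n x] converge along a subsequence to a ray xi+, and along a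
   further subsequence the segments [x, g_n^-1 x] converge to a ray xi-.
   Let xi be a visibility point other than xi- and l a geodesic line from xi- to xi.
   Pulled back by g_n, a ray from x0 towards g_n xi becomes a ray from y_n = g_n^-1 x0
   towards xi, and y_n runs off towards xi-. So for s large the triangle y_n, l 0, l s is
   almost degenerate at l 0, and CAT(0) comparison makes the initial parts of [y_n, l 0] and
   of [y_n, l s] (which approximates the ray) close. Pushing forward, the ray from x0 towards
   g_n xi stays close to the segment [x0, g_n (l 0)] up to any fixed radius, and these
   segments converge to the ray from x0 to xi+ because g_n (l 0) stays at bounded distance
   from g_n x. *)

Definition strictly_increasing (f : nat -> nat) : Prop := forall n, (f n < f (S n))%nat.

Lemma strictly_increasing_lt f :
  strictly_increasing f -> forall m n, (m < n)%nat -> (f m < f n)%nat.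
Proof.
  intros Hf m n Hmn. induction Hmn as [|n _ IH]; [apply Hf|].
  specialize (Hf n). lia.
Qed.

Lemma strictly_increasing_le f :
  strictly_increasing f -> forall m n, (m <= n)%nat -> (f m <= f n)%nat.
Proof.
  intros Hf m n Hmn. destruct (Nat.eq_dec m n) as [->|Hne]; [lia|].
  pose proof (strictly_increasing_lt f Hf m n ltac:(lia)). lia.
Qed.

Lemma strictly_increasing_ge f : strictly_increasing f -> forall n, (n <= f n)%nat.
Proof. intros Hf n. induction n as [|n IH]; [lia|]. specialize (Hf n). lia. Qed.

Lemma strictly_increasing_comp f h :
  strictly_increasing f -> strictly_increasing h -> strictly_increasing (fun n => f (h n)).
Proof. intros Hf Hh n. apply (strictly_increasing_lt f Hf), Hh. Qed.

Definition diverges (u : nat -> R) : Prop :=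
  forall M, exists N, forall n, (N <= n)%nat -> M <= u n.

Lemma diverges_lower_bound (u v : nat -> R) C :
  diverges u -> (forall n, u n - C <= v n) -> diverges v.
Proof.
  intros Hu Huv M. destruct (Hu (M + C)) as [N HN]. exists N. intros n Hn.
  specialize (HN n Hn). specialize (Huv n). lra.
Qed.

Lemma diverges_subseq u phi :
  strictly_increasing phi -> diverges u -> diverges (fun n => u (phi n)).
Proof.
  intros Hphi Hu M. destruct (Hu M) as [N HN]. exists N. intros n Hn.
  apply HN. pose proof (strictly_increasing_ge phi Hphi n). lia.
Qed.

Lemma ratio_eventually_small (r K eps A : R) :
  0 <= r -> 0 <= K -> 0 < eps -> exists T, A <= T /\ 0 < T /\ r / T * K < eps.
Proof.
  intros Hr HK Heps. set (T := Rmax A 0 + 1 + r * K / eps).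
  assert (HrK : r * K / eps * eps = r * K) by (field; lra).
  assert (HrK0 : 0 <= r * K / eps) by (apply Rle_mult_inv_pos; nra).
  pose proof (Rmax_l A 0). pose proof (Rmax_r A 0).
  assert (HT : 0 < T) by (unfold T; lra).
  exists T. split; [unfold T; lra|split; [exact HT|]].
  replace (r / T * K) with (r * K / T) by (field; lra).
  apply (Rmult_lt_reg_r T); [exact HT|].
  replace (r * K / T * T) with (r * K) by (field; lra).
  unfold T. nra.
Qed.

Definition converges {X} (d : X -> X -> R) (u : nat -> X) (a : X) : Prop :=
  forall eps, 0 < eps -> exists N, forall n, (N <= n)%nat -> d (u n) a < eps.

Definition cauchy {X} (d : X -> X -> R) (u : nat -> X) : Prop :=
  forall eps, 0 < eps -> exists N, forall m n, (N <= m)%nat -> (N <= n)%nat ->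
    d (u m) (u n) < eps.

(* Convergence of w to the boundary point of c in the cone topology based at x0. *)
Definition tends_to_ray {X} (d : X -> X -> R) (x0 : X) (w : nat -> X) (c : R -> X) : Prop :=
  diverges (fun n => d x0 (w n)) /\
  forall t eps, 0 <= t -> 0 < eps -> exists N, forall n, (N <= n)%nat ->
    forall s, geod_seg d s x0 (w n) -> d (s t) (c t) < eps.

Lemma tends_to_ray_subseq {X} (d : X -> X -> R) x0 w c phi :
  strictly_increasing phi -> tends_to_ray d x0 w c -> tends_to_ray d x0 (fun n => w (phi n)) c.
Proof.
  intros Hphi [Hdiv Hconv]. split; [exact (diverges_subseq _ phi Hphi Hdiv)|].
  intros t eps Ht He. destruct (Hconv t eps Ht He) as [N HN]. exists N.
  intros n Hn. apply HN. pose proof (strictly_increasing_ge phi Hphi n). lia.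
Qed.

Section Metric.
Context {X : Type} {d : X -> X -> R} (Hm : is_metric d).

Lemma dist_refl x : d x x = 0.
Proof. apply (proj1 Hm). reflexivity. Qed.

Lemma dist_sym x y : d x y = d y x.
Proof. apply (proj2 Hm). Qed.

Lemma dist_triangle x y z : d x z <= d x y + d y z.
Proof. apply (proj2 Hm). Qed.

Lemma dist_ge0 x y : 0 <= d x y.
Proof.
  pose proof (dist_triangle x y x) as Htri. rewrite dist_refl, (dist_sym y x) in Htri. lra.
Qed.

Lemma dist_le0 x y : d x y <= 0 -> x = y.
Proof. intro H. apply (proj1 Hm). pose proof (dist_ge0 x y). lra. Qed.

Lemma dist_quadrangle a b u v : Rabs (d a b - d u v) <= d a u + d b v.
Proof.
  pose proof (dist_triangle a u b). pose proof (dist_triangle u v b).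
  pose proof (dist_triangle u a v). pose proof (dist_triangle a b v).
  rewrite (dist_sym u a), (dist_sym u b) in *. rewrite (dist_sym v b) in *.
  apply Rabs_le. lra.
Qed.

Lemma converges_cauchy u a : converges d u a -> cauchy d u.
Proof.
  intros Ha eps He. destruct (Ha (eps / 2)) as [N HN]; [lra|]. exists N.
  intros m n Hmn Hn. pose proof (HN m Hmn). pose proof (HN n Hn).
  pose proof (dist_triangle (u m) a (u n)). rewrite (dist_sym a) in *. lra.
Qed.

Lemma converges_dist_eventually_const u v a b r :
  converges d u a -> converges d v b ->
  (exists N, forall n, (N <= n)%nat -> d (u n) (v n) = r) -> d a b = r.
Proof.
  intros Ha Hb [N0 HN0].
  enough (Hclose : forall eps, 0 < eps -> Rabs (d a b - r) <= eps).
  { apply Rminus_diag_uniq. destruct (Req_dec (d a b - r) 0) as [E|E]; [exact E|].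
    pose proof (Rabs_pos_lt _ E). pose proof (Hclose (Rabs (d a b - r) / 2) ltac:(lra)).
    lra. }
  intros eps He.
  destruct (Ha (eps / 2)) as [N1 HN1]; [lra|]. destruct (Hb (eps / 2)) as [N2 HN2]; [lra|].
  set (n := (N0 + N1 + N2)%nat).
  specialize (HN0 n ltac:(lia)). specialize (HN1 n ltac:(lia)). specialize (HN2 n ltac:(lia)).
  pose proof (dist_quadrangle a b (u n) (v n)) as Hq. rewrite HN0 in Hq.
  rewrite (dist_sym a (u n)), (dist_sym b (v n)) in Hq. lra.
Qed.

Lemma asymptotic_sym c1 c2 : asymptotic d c1 c2 -> asymptotic d c2 c1.
Proof. intros [B HB]. exists B. intros t Ht. rewrite dist_sym. auto. Qed.

Lemma asymptotic_trans c1 c2 c3 :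
  asymptotic d c1 c2 -> asymptotic d c2 c3 -> asymptotic d c1 c3.
Proof.
  intros [B1 H1] [B2 H2]. exists (B1 + B2). intros t Ht.
  pose proof (dist_triangle (c1 t) (c2 t) (c3 t)). pose proof (H1 t Ht). pose proof (H2 t Ht).
  lra.
Qed.

Lemma asymptotic_nonneg_bound c1 c2 :
  asymptotic d c1 c2 -> exists B, 0 <= B /\ forall t, 0 <= t -> d (c1 t) (c2 t) <= B.
Proof.
  intros [B HB]. exists B. split; [|exact HB].
  pose proof (HB 0 (Rle_refl 0)). pose proof (dist_ge0 (c1 0) (c2 0)). lra.
Qed.

Lemma geod_seg_dist c p q s t :
  geod_seg d c p q -> 0 <= s <= d p q -> 0 <= t <= d p q -> d (c s) (c t) = Rabs (s - t).
Proof. intros [_ [_ H]]. apply H. Qed.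

Lemma geod_seg_dist_start c p q s : geod_seg d c p q -> 0 <= s <= d p q -> d p (c s) = s.
Proof.
  intros Hc Hs. pose proof Hc as [H0 _]. rewrite <- H0 at 1.
  rewrite (geod_seg_dist c p q) by (auto; pose proof (dist_ge0 p q); lra).
  rewrite Rabs_left1; lra.
Qed.

Lemma geod_seg_restrict c p q T : geod_seg d c p q -> 0 <= T <= d p q -> geod_seg d c p (c T).
Proof.
  intros Hc HT. pose proof (geod_seg_dist_start c p q T Hc HT) as E.
  destruct Hc as [H0 [_ H2]]. split; [exact H0|split].
  - rewrite E. reflexivity.
  - rewrite E. intros s t Hs Ht. apply H2; lra.
Qed.

Lemma geod_seg_reverse c p q : geod_seg d c p q -> geod_seg d (fun s => c (d p q - s)) q p.
Proof.
  intros [H0 [H1 H2]]. unfold geod_seg. rewrite (dist_sym q p). split; [|split].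
  - rewrite Rminus_0_r. exact H1.
  - rewrite Rminus_diag. exact H0.
  - intros s t Hs Ht. rewrite H2 by lra. rewrite Rabs_minus_sym. f_equal. ring.
Qed.

Lemma geod_ray_seg c T : geod_ray d c -> 0 <= T -> geod_seg d c (c 0) (c T) /\ d (c 0) (c T) = T.
Proof.
  intros Hc HT. assert (E : d (c 0) (c T) = T) by (rewrite Hc, Rabs_left1; lra).
  split; [|exact E]. split; [reflexivity|split].
  - rewrite E. reflexivity.
  - rewrite E. intros s t Hs Ht. apply Hc; lra.
Qed.

Lemma geod_line_ray l : geod_line d l -> geod_ray d l.
Proof. intros H s t _ _. apply H. Qed.

Lemma geod_line_neg_ray l : geod_line d l -> geod_ray d (fun t => l (- t)).
Proof.
  intros H s t _ _. rewrite H. replace (- s - - t) with (- (s - t)) by ring. apply Rabs_Ropp.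
Qed.

End Metric.

Section Isometry.
Context {X : Type} {d : X -> X -> R} (f : X -> X) (Hf : forall x y, d (f x) (f y) = d x y).

Lemma geod_seg_isometry c p q : geod_seg d c p q -> geod_seg d (fun s => f (c s)) (f p) (f q).
Proof.
  intros [H0 [H1 H2]]. unfold geod_seg. rewrite Hf, H0, H1. split; [|split]; auto.
  intros. rewrite Hf. auto.
Qed.

Lemma geod_ray_isometry c : geod_ray d c -> geod_ray d (fun s => f (c s)).
Proof. intros Hc s t Hs Ht. rewrite Hf. auto. Qed.

End Isometry.

Section Proper.
Context {X : Type} {d : X -> X -> R} (Hm : is_metric d) (Hprop : proper_space d).

Lemma proper_bounded_cluster x r (u : nat -> X) :
  (forall n, d x (u n) <= r) ->
  exists a, forall eps, 0 < eps -> forall N, exists n, (N <= n)%nat /\ d a (u n) < eps.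
Proof.
  intros Hu. apply NNPP. intro Hno.
  assert (Hsep : forall a, exists p : R * nat, 0 < fst p /\
                   forall n, (snd p <= n)%nat -> fst p <= d a (u n)).
  { intro a. apply NNPP. intro Hc. apply Hno. exists a. intros eps He N.
    apply NNPP. intro Hc2. apply Hc. exists (eps, N). split; [exact He|].
    intros n Hn. apply Rnot_lt_le. intro Hl. apply Hc2. exists n. auto. }
  destruct (choice _ Hsep) as [F HF].
  destruct (Hprop x r X (fun a y => d a y < fst (F a))) as [l Hl].
  - intros a y Hy. exists (fst (F a) - d a y). split; [lra|].
    intros z Hz. pose proof (dist_triangle Hm a y z). lra.
  - intros y _. exists y. rewrite (dist_refl Hm). apply HF.
  - set (N := list_max (map (fun a => snd (F a)) l)).
    destruct (Hl (u N) (Hu N)) as [a [Ha Hclose]].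
    assert (HaN : (snd (F a) <= N)%nat).
    { assert (Hall := proj1 (list_max_le (map (fun a => snd (F a)) l) N) (le_n N)).
      rewrite Forall_forall in Hall. apply Hall, (in_map (fun a => snd (F a))), Ha. }
    pose proof (proj2 (HF a) N HaN). lra.
Qed.

Lemma proper_bounded_subseq_converges x r (u : nat -> X) :
  (forall n, d x (u n) <= r) ->
  exists phi a, strictly_increasing phi /\ converges d (fun n => u (phi n)) a.
Proof.
  intros Hu. destruct (proper_bounded_cluster x r u Hu) as [a Ha].
  assert (Hnext : forall (N k : nat), exists n, (N <= n)%nat /\ d a (u n) < / INR (S k))
    by (intros N k; apply Ha, Rinv_0_lt_compat, lt_0_INR; lia).
  destruct (choice (fun Nk n => (fst Nk <= n)%nat /\ d a (u n) < / INR (S (snd Nk))))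
    as [F HF]; [intros [N k]; apply Hnext|].
  pose (phi := fix phi k := match k with
                            | O => F (O, O)
                            | S k => F (S (phi k), S k) end).
  assert (Hphi : forall k, d a (u (phi k)) < / INR (S k)) by (intros [|k]; apply HF).
  exists phi, a. split.
  - intro n. exact (proj1 (HF (S (phi n), S n))).
  - intros eps He. destruct (archimed_cor1 eps He) as [N [HN HN0]]. exists N.
    intros n Hn. rewrite (dist_sym Hm). eapply Rlt_le_trans; [apply Hphi|].
    apply Rle_trans with (/ INR N); [|lra].
    apply Rinv_le_contravar; [apply lt_0_INR; lia|apply le_INR; lia].
Qed.

Lemma proper_cauchy_converges u : cauchy d u -> exists a, converges d u a.
Proof.
  intros Hc. destruct (Hc 1) as [N0 HN0]; [lra|].
  destruct (proper_bounded_subseq_converges (u N0) 1 (fun n => u (n + N0)%nat))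
    as [phi [a [Hphi Ha]]]; [intro n; apply Rlt_le, HN0; lia|].
  exists a. intros eps He.
  destruct (Hc (eps / 2)) as [N1 HN1]; [lra|]. destruct (Ha (eps / 2)) as [N2 HN2]; [lra|].
  exists N1. intros n Hn. set (k := (N1 + N2)%nat).
  pose proof (strictly_increasing_ge phi Hphi k).
  pose proof (HN2 k ltac:(lia)). pose proof (HN1 n (phi k + N0)%nat Hn ltac:(lia)).
  pose proof (dist_triangle Hm (u n) (u (phi k + N0)%nat) a). simpl in *. lra.
Qed.

Lemma proper_diagonal_subseq x (r : nat -> R) (f : nat -> nat -> X) :
  (forall k n, d x (f k n) <= r k) ->
  exists phi, strictly_increasing phi /\ forall k, exists L, converges d (fun n => f k (phi n)) L.
Proof.
  intros Hf.
  assert (Hext : forall (kpsi : nat * (nat -> nat)), exists psi', strictly_increasing psi' /\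
            exists L, converges d (fun n => f (fst kpsi) (snd kpsi (psi' n))) L).
  { intros [k psi]. destruct (proper_bounded_subseq_converges x (r k) (fun n => f k (psi n)))
      as [h [L [Hh HL]]]; [intro; apply Hf|].
    exists h. split; [exact Hh|]. exists L. exact HL. }
  destruct (choice _ Hext) as [E HE].
  pose (Psi := fix Psi k := match k with
                            | O => E (O, fun n => n)
                            | S k => fun n => Psi k (E (S k, Psi k) n) end).
  assert (HPsi : forall k, strictly_increasing (Psi k)).
  { induction k; [apply HE|]. exact (strictly_increasing_comp _ _ IHk (proj1 (HE (S k, Psi k)))). }
  assert (HPsi_lim : forall k, exists L, converges d (fun n => f k (Psi k n)) L)
    by (intros [|k]; [exact (proj2 (HE (O, fun n => n)))|exact (proj2 (HE (S k, Psi k)))]).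
  assert (Hnested : forall k j, exists h, (forall i, (i <= h i)%nat) /\
                      forall i, Psi (j + k)%nat i = Psi k (h i)).
  { intros k j. induction j as [|j [h [Hh1 Hh2]]]; [exists (fun i => i); auto|].
    exists (fun i => h (E (S (j + k), Psi (j + k)%nat) i)). split.
    - intro i. pose proof (strictly_increasing_ge _ (proj1 (HE (S (j + k), Psi (j + k)%nat))) i).
      specialize (Hh1 (E (S (j + k), Psi (j + k)%nat) i)). lia.
    - intro i. simpl. rewrite <- Hh2. reflexivity. }
  exists (fun n => Psi n n). split.
  - intro n. simpl.
    pose proof (strictly_increasing_ge _ (proj1 (HE (S n, Psi n))) (S n)).
    apply Nat.lt_le_trans with (Psi n (S n)); [apply HPsi|].
    apply strictly_increasing_le; [apply HPsi|lia].
  - intro k. destruct (HPsi_lim k) as [L HL]. exists L. intros eps He.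
    destruct (HL eps He) as [N HN]. exists (N + k)%nat. intros n Hn.
    destruct (Hnested k (n - k)%nat) as [h [Hh1 Hh2]].
    replace (n - k + k)%nat with n in Hh2 by lia. rewrite Hh2.
    apply HN. specialize (Hh1 n). lia.
Qed.

End Proper.

Lemma comparison_triangle a b e :
  0 < a -> 0 <= e -> e <= a + b -> a <= b + e -> b <= a + e ->
  exists u v, 2 * a * u = a ^ 2 + b ^ 2 - e ^ 2 /\ u ^ 2 + v ^ 2 = b ^ 2 /\
    dE (0, 0) (a, 0) = a /\ dE (a, 0) (u, v) = e /\ dE (u, v) (0, 0) = b.
Proof.
  intros Ha He Hab Hba Hbe.
  set (u := (a ^ 2 + b ^ 2 - e ^ 2) / (2 * a)).
  assert (Hu : 2 * a * u = a ^ 2 + b ^ 2 - e ^ 2) by (unfold u; field; lra).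
  assert (Hv : 0 <= b ^ 2 - u ^ 2).
  { apply (Rmult_le_reg_r ((2 * a) ^ 2)); [nra|].
    replace ((b ^ 2 - u ^ 2) * (2 * a) ^ 2) with ((e ^ 2 - (a - b) ^ 2) * ((a + b) ^ 2 - e ^ 2))
      by (assert (E : e ^ 2 = a ^ 2 + b ^ 2 - 2 * a * u) by lra; rewrite E; ring).
    rewrite Rmult_0_l. apply Rmult_le_pos.
    - replace (e ^ 2 - (a - b) ^ 2) with ((e - a + b) * (e + a - b)) by ring.
      apply Rmult_le_pos; lra.
    - replace ((a + b) ^ 2 - e ^ 2) with ((a + b - e) * (a + b + e)) by ring.
      apply Rmult_le_pos; lra. }
  exists u, (sqrt (b ^ 2 - u ^ 2)).
  assert (Hv2 : u ^ 2 + sqrt (b ^ 2 - u ^ 2) ^ 2 = b ^ 2) by (rewrite pow2_sqrt; lra).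
  split; [exact Hu|split; [exact Hv2|]].
  unfold dE; cbn [fst snd]. split; [|split].
  - replace ((0 - a) ^ 2 + (0 - 0) ^ 2) with (a ^ 2) by ring. apply sqrt_pow2. lra.
  - replace ((a - u) ^ 2 + (0 - sqrt (b ^ 2 - u ^ 2)) ^ 2) with (e ^ 2) by nra.
    apply sqrt_pow2. exact He.
  - replace ((u - 0) ^ 2 + (sqrt (b ^ 2 - u ^ 2) - 0) ^ 2) with (b ^ 2) by nra.
    apply sqrt_pow2. lra.
Qed.

Section CAT0.
Context {X : Type} {d : X -> X -> R} (HX : CAT0_space d).
Let Hm : is_metric d := proj1 HX.

Lemma cat0_law_of_cosines p q r c1 c2 t1 t2 :
  geod_seg d c1 p q -> geod_seg d c2 p r -> 0 < d p q -> 0 < d p r ->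
  0 <= t1 <= d p q -> 0 <= t2 <= d p r ->
  d (c1 t1) (c2 t2) ^ 2 <=
    t1 ^ 2 + t2 ^ 2 - t1 * t2 * (d p q ^ 2 + d p r ^ 2 - d q r ^ 2) / (d p q * d p r).
Proof.
  pose proof HX as [_ [Hgeo Hcat]]. intros Hc1 Hc2 Ha Hb Ht1 Ht2.
  destruct (Hgeo q r) as [c0 Hc0].
  pose proof (geod_seg_reverse Hm c2 p r Hc2) as Hc3.
  pose proof (dist_triangle Hm q p r) as T1. pose proof (dist_triangle Hm p r q) as T2.
  pose proof (dist_triangle Hm p q r) as T3.
  rewrite (dist_sym Hm q p) in T1. rewrite (dist_sym Hm r q) in T2.
  destruct (comparison_triangle (d p q) (d p r) (d q r)) as [u [v [Hu [Huv [E1 [E2 E3]]]]]];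
    auto; [apply (dist_ge0 Hm)|].
  rewrite (dist_sym Hm p r) in E3.
  (* In the comparison triangle (0,0), (d p q, 0), (u, v), the point c2 t2 is read on the
     side from r back to p. *)
  assert (Hle : d (c1 t1) (c2 t2) <=
                dE (segE (0, 0) (d p q, 0) (d p q) t1) (segE (u, v) (0, 0) (d r p) (d r p - t2))).
  { apply (Hcat p q r c1 c0 _ Hc1 Hc0 Hc3 (0, 0) (d p q, 0) (u, v) E1 E2 E3).
    - left. exists t1. auto.
    - right; right. exists (d r p - t2). rewrite (dist_sym Hm r p).
      split; [lra|split; [|reflexivity]]. f_equal. ring. }
  rewrite (dist_sym Hm r p) in Hle.
  eapply Rle_trans; [apply pow_incr; split; [apply (dist_ge0 Hm)|exact Hle]|].
  set (a := d p q) in *. set (b := d p r) in *. set (e := d q r) in *.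
  unfold dE, segE; cbn [fst snd].
  rewrite pow2_sqrt by (apply Rplus_le_le_0_compat; apply pow2_ge_0).
  apply Req_le. replace (e ^ 2) with (a ^ 2 + b ^ 2 - 2 * a * u) by lra. field_simplify_eq; [|lra].
  rewrite <- Huv. ring.
Qed.

Lemma cat0_proportional p q r c1 c2 lam :
  geod_seg d c1 p q -> geod_seg d c2 p r -> 0 <= lam <= 1 ->
  d (c1 (lam * d p q)) (c2 (lam * d p r)) <= lam * d q r.
Proof.
  intros Hc1 Hc2 Hl.
  pose proof (dist_ge0 Hm p q). pose proof (dist_ge0 Hm p r).
  destruct (Req_dec (d p q) 0) as [Ea|Ea].
  { rewrite Ea, Rmult_0_r, (proj1 Hc1), <- (dist_le0 Hm p q ltac:(lra)).
    rewrite (geod_seg_dist_start Hm c2 p r) by (auto; split; nra). lra. }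
  destruct (Req_dec (d p r) 0) as [Eb|Eb].
  { rewrite Eb, Rmult_0_r, (proj1 Hc2), <- (dist_le0 Hm p r ltac:(lra)).
    rewrite (dist_sym Hm _ p), (dist_sym Hm q p), (geod_seg_dist_start Hm c1 p q)
      by (auto; split; nra).
    lra. }
  pose proof (cat0_law_of_cosines p q r c1 c2 (lam * d p q) (lam * d p r) Hc1 Hc2
                ltac:(lra) ltac:(lra) ltac:(split; nra) ltac:(split; nra)) as C.
  replace ((lam * d p q) ^ 2 + (lam * d p r) ^ 2 - lam * d p q * (lam * d p r) *
             (d p q ^ 2 + d p r ^ 2 - d q r ^ 2) / (d p q * d p r))
    with ((lam * d q r) ^ 2) in C by (field; lra).
  assert (0 <= lam * d q r) by (apply Rmult_le_pos; [lra|apply (dist_ge0 Hm)]).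
  pose proof (dist_ge0 Hm (c1 (lam * d p q)) (c2 (lam * d p r))). nra.
Qed.

Lemma geod_segs_dist_scale p q r c1 c2 t T :
  geod_seg d c1 p q -> geod_seg d c2 p r -> 0 <= t <= T -> T <= d p q -> T <= d p r ->
  d (c1 t) (c2 t) <= t / T * d (c1 T) (c2 T).
Proof.
  intros Hc1 Hc2 Ht Hq Hr.
  destruct (Req_dec T 0) as [E|E].
  { replace t with 0 by lra. rewrite (proj1 Hc1), (proj1 Hc2), (dist_refl Hm). lra. }
  pose proof (geod_seg_restrict Hm c1 p q T Hc1 ltac:(lra)) as S1.
  pose proof (geod_seg_restrict Hm c2 p r T Hc2 ltac:(lra)) as S2.
  pose proof (cat0_proportional _ _ _ c1 c2 (t / T) S1 S2) as P.
  rewrite (geod_seg_dist_start Hm c1 p q), (geod_seg_dist_start Hm c2 p r) in P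
    by (try assumption; lra).
  replace (t / T * T) with t in P by (field; lra).
  apply P. split; [apply Rle_mult_inv_pos; lra|].
  apply (Rmult_le_reg_r T); [lra|]. replace (t / T * T) with t by (field; lra). lra.
Qed.

Lemma geod_segs_dist_mono p q r c1 c2 t T :
  geod_seg d c1 p q -> geod_seg d c2 p r -> 0 <= t <= T -> T <= d p q -> T <= d p r ->
  d (c1 t) (c2 t) <= d (c1 T) (c2 T).
Proof.
  intros Hc1 Hc2 Ht Hq Hr.
  pose proof (geod_segs_dist_scale p q r c1 c2 t T Hc1 Hc2 Ht Hq Hr).
  pose proof (dist_ge0 Hm (c1 T) (c2 T)).
  destruct (Req_dec T 0) as [E|E].
  - replace t with 0 by lra. rewrite (proj1 Hc1), (proj1 Hc2), (dist_refl Hm). lra.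
  - assert (t / T <= 1).
    { apply (Rmult_le_reg_r T); [lra|]. replace (t / T * T) with t by (field; lra). lra. }
    nra.
Qed.

Lemma geod_seg_unique p q c1 c2 t :
  geod_seg d c1 p q -> geod_seg d c2 p q -> 0 <= t <= d p q -> c1 t = c2 t.
Proof.
  intros Hc1 Hc2 Ht. apply (dist_le0 Hm).
  pose proof (geod_segs_dist_mono p q q c1 c2 t (d p q) Hc1 Hc2 Ht (Rle_refl _) (Rle_refl _))
    as Hmono.
  rewrite (proj1 (proj2 Hc1)), (proj1 (proj2 Hc2)), (dist_refl Hm) in Hmono. exact Hmono.
Qed.

Lemma geod_rays_asymptotic_eq c1 c2 t :
  geod_ray d c1 -> geod_ray d c2 -> c1 0 = c2 0 -> asymptotic d c1 c2 -> 0 <= t -> c1 t = c2 t.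
Proof.
  intros H1 H2 H0 Has Ht.
  destruct (asymptotic_nonneg_bound Hm c1 c2 Has) as [B [HB0 HB]].
  apply (dist_le0 Hm), Rle_plus_epsilon. intros eps He.
  destruct (ratio_eventually_small t B eps t Ht HB0 He) as [T [HtT [HT Hsmall]]].
  destruct (geod_ray_seg c1 T H1 ltac:(lra)) as [S1 D1].
  destruct (geod_ray_seg c2 T H2 ltac:(lra)) as [S2 D2]. rewrite <- H0 in S2, D2.
  pose proof (geod_segs_dist_scale _ _ _ c1 c2 t T S1 S2 ltac:(lra) ltac:(lra) ltac:(lra)).
  pose proof (HB T ltac:(lra)).
  assert (0 <= t / T) by (apply Rle_mult_inv_pos; lra).
  nra.
Qed.

Lemma geod_segs_close_near_start p q r c1 c2 t :
  geod_seg d c1 p q -> geod_seg d c2 p r -> 0 <= t <= d p q -> t <= d p r ->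
  d (c1 t) (c2 t) <= 2 * (t / d p q) * d q r.
Proof.
  intros Hc1 Hc2 Ht Htr.
  destruct (Req_dec (d p q) 0) as [E|E].
  { replace t with 0 by lra. rewrite (proj1 Hc1), (proj1 Hc2), (dist_refl Hm). lra. }
  set (lam := t / d p q).
  assert (Hlam : lam * d p q = t) by (unfold lam; field; exact E).
  assert (Hl : 0 <= lam <= 1).
  { split; [apply Rle_mult_inv_pos; lra|].
    apply (Rmult_le_reg_r (d p q)); lra. }
  pose proof (cat0_proportional p q r c1 c2 lam Hc1 Hc2 Hl) as P. rewrite Hlam in P.
  assert (Hpr : 0 <= lam * d p r <= d p r) by (pose proof (dist_ge0 Hm p r); split; nra).
  assert (Hshift : d (c2 (lam * d p r)) (c2 t) <= lam * d q r).
  { rewrite (geod_seg_dist c2 p r) by (auto; lra). rewrite <- Hlam, <- Rmult_minus_distr_l.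
    rewrite Rabs_mult, Rabs_pos_eq by lra. apply Rmult_le_compat_l; [lra|].
    pose proof (dist_triangle Hm p q r). pose proof (dist_triangle Hm p r q).
    rewrite (dist_sym Hm r q) in *. apply Rabs_le. lra. }
  pose proof (dist_triangle Hm (c1 t) (c2 (lam * d p r)) (c2 t)). lra.
Qed.

Lemma geod_segs_common_end_close x x0 z c1 c2 T :
  geod_seg d c1 x z -> geod_seg d c2 x0 z -> 0 <= T <= d x z -> T <= d x0 z ->
  d (c1 T) (c2 T) <= 2 * d x x0.
Proof.
  intros Hc1 Hc2 HT HT0.
  set (L := d x z) in *. set (M := d x0 z) in *. set (delta := d x x0).
  assert (Hdelta : 0 <= delta) by apply (dist_ge0 Hm).
  assert (HML : Rabs (M - L) <= delta).
  { pose proof (dist_triangle Hm x x0 z). pose proof (dist_triangle Hm x0 x z).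
    rewrite (dist_sym Hm x0 x) in *. apply Rabs_le. unfold M, L, delta in *. lra. }
  destruct (Req_dec L 0) as [E|E].
  { replace T with 0 by lra. rewrite (proj1 Hc1), (proj1 Hc2). fold delta. lra. }
  set (lam := (L - T) / L).
  assert (Hl : 0 <= lam <= 1).
  { split; [apply Rle_mult_inv_pos; lra|].
    apply (Rmult_le_reg_r L); [lra|]. unfold lam. field_simplify; lra. }
  pose proof (cat0_proportional z x x0 _ _ lam (geod_seg_reverse Hm c1 x z Hc1)
                (geod_seg_reverse Hm c2 x0 z Hc2) Hl) as P.
  rewrite (dist_sym Hm z x), (dist_sym Hm z x0) in P. fold L M delta in P.
  replace (L - lam * L) with T in P by (unfold lam; field; exact E).
  set (T' := M - lam * M) in P.
  assert (HT' : 0 <= T' <= M) by (unfold T'; pose proof (dist_ge0 Hm x0 z); split; nra).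
  assert (Hshift : d (c2 T') (c2 T) <= delta).
  { rewrite (geod_seg_dist c2 x0 z) by (auto; fold M; lra).
    replace (T' - T) with (T / L * (M - L)) by (unfold T', lam; field; exact E).
    rewrite Rabs_mult, Rabs_pos_eq by (apply Rle_mult_inv_pos; lra).
    assert (T / L <= 1) by (apply (Rmult_le_reg_r L); [lra|]; field_simplify; lra).
    pose proof (Rabs_pos (M - L)).
    assert (0 <= T / L) by (apply Rle_mult_inv_pos; lra).
    nra. }
  pose proof (dist_triangle Hm (c1 T) (c2 T') (c2 T)). nra.
Qed.

(* If the segment from l 0 to y starts out along the negative half of the line l,
   then l 0 lies almost on a geodesic from y to l s. *)
Lemma dist_to_line_ge_of_backtrack l y sigma t s :
  geod_line d l -> geod_seg d sigma (l 0) y -> 0 < t -> t <= d (l 0) y -> t <= s ->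
  d (l 0) y + s - 4 * d (l 0) y * d (sigma t) (l (- t)) / t <= d y (l s).
Proof.
  intros Hl Hsigma Ht Hta Hts.
  destruct (geod_ray_seg l s (geod_line_ray l Hl) ltac:(lra)) as [Sl Dl].
  pose proof (cat0_law_of_cosines _ _ _ sigma l t t Hsigma Sl
                ltac:(lra) ltac:(lra) ltac:(lra) ltac:(lra)) as C.
  rewrite Dl in C.
  set (a := d (l 0) y) in *. set (e := d y (l s)) in *. set (del := d (sigma t) (l (- t))).
  assert (Hdel0 : 0 <= del) by apply (dist_ge0 Hm).
  assert (He0 : 0 <= e) by apply (dist_ge0 Hm).
  assert (Hes : s - a <= e).
  { pose proof (dist_triangle Hm (l 0) y (l s)) as Htri. fold a e in Htri. lra. }
  set (u := del / t).
  assert (Hu : u * t = del) by (unfold u; field; lra).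
  assert (Hu0 : 0 <= u) by (unfold u; apply Rle_mult_inv_pos; lra).
  replace (4 * a * del / t) with (4 * a * u) by (unfold u; field; lra).
  destruct (Rle_or_lt 2 u) as [Hu2|Hu2]; [nra|].
  assert (Hfar : 2 * t - del <= d (sigma t) (l t)).
  { pose proof (dist_triangle Hm (l (- t)) (sigma t) (l t)) as T.
    rewrite Hl, Rabs_left1, (dist_sym Hm (l (- t))) in T by lra. fold del in T. lra. }
  set (k := (a ^ 2 + s ^ 2 - e ^ 2) / (a * s)).
  assert (Hk : k * (a * s) = a ^ 2 + s ^ 2 - e ^ 2) by (unfold k; field; lra).
  replace (t * t * (a ^ 2 + s ^ 2 - e ^ 2) / (a * s)) with (t * t * k) in C
    by (unfold k; field; lra).
  assert (H1 : (2 * t - del) ^ 2 <= t ^ 2 + t ^ 2 - t * t * k).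
  { eapply Rle_trans; [|exact C]. apply pow_incr. split; [nra|exact Hfar]. }
  rewrite <- Hu in H1.
  assert (H2 : (2 - u) ^ 2 <= 2 - k) by (apply (Rmult_le_reg_r (t ^ 2)); nra).
  assert (H3 : e ^ 2 >= (a + s) ^ 2 - 4 * a * s * u).
  { assert (k * (a * s) <= (2 - (2 - u) ^ 2) * (a * s)) by (apply Rmult_le_compat_r; nra).
    assert (0 <= u ^ 2 * (a * s)) by (apply Rmult_le_pos; nra). nra. }
  apply Rnot_lt_le. intro Hc.
  assert (e ^ 2 < (a + s - 4 * a * u) ^ 2) by nra.
  assert (8 * a * a * u + 4 * a * s * u < 16 * a * a * u * u) by nra.
  assert (0 < u) by (destruct (Req_dec u 0) as [E|E]; [rewrite E in *; lra|lra]).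
  assert (2 * a + s < 4 * a * u) by (apply (Rmult_lt_reg_r (4 * a * u)); nra).
  lra.
Qed.

Lemma geod_segs_close_of_almost_aligned y p q c1 c2 t eta :
  geod_seg d c1 y p -> geod_seg d c2 y q -> 0 < d y p -> 0 < d y q ->
  0 <= t <= d y p -> t <= d y q -> 0 <= eta <= 1 ->
  d y p + d p q - eta * d y p <= d y q ->
  d (c1 t) (c2 t) ^ 2 <= 2 * eta * t ^ 2.
Proof.
  intros Hc1 Hc2 Ha Hb Ht Htq Heta Haligned.
  pose proof (cat0_law_of_cosines y p q c1 c2 t t Hc1 Hc2 Ha Hb Ht ltac:(lra)) as C.
  set (a := d y p) in *. set (b := d y q) in *. set (s := d p q) in *.
  assert (Hb1 : b <= a + s) by apply (dist_triangle Hm).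
  assert (Hb2 : a <= b + s).
  { pose proof (dist_triangle Hm y q p) as T.
    rewrite (dist_sym Hm q p) in T. fold a b s in T. lra. }
  assert (Hkey : s ^ 2 - (a - b) ^ 2 <= 2 * eta * a * b).
  { replace (s ^ 2 - (a - b) ^ 2) with ((s - b + a) * (s + b - a)) by ring.
    assert (eta * a <= a) by nra.
    destruct (Rle_or_lt (s - b + a) 0); [nra|].
    assert (s - b + a <= eta * a) by lra. nra. }
  eapply Rle_trans; [exact C|].
  replace (t ^ 2 + t ^ 2 - t * t * (a ^ 2 + b ^ 2 - s ^ 2) / (a * b))
    with (t ^ 2 * (s ^ 2 - (a - b) ^ 2) / (a * b)) by (field; lra).
  apply (Rmult_le_reg_r (a * b)); [nra|].
  replace (t ^ 2 * (s ^ 2 - (a - b) ^ 2) / (a * b) * (a * b))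
    with (t ^ 2 * (s ^ 2 - (a - b) ^ 2)) by (field; lra).
  replace (2 * eta * t ^ 2 * (a * b)) with (t ^ 2 * (2 * eta * a * b)) by ring.
  apply Rmult_le_compat_l; [nra|exact Hkey].
Qed.

Lemma ray_close_to_segment_of_backtrack l y rho tau sigma t eta M :
  geod_line d l -> geod_ray d rho -> rho 0 = y -> asymptotic d rho l ->
  geod_seg d tau y (l 0) -> geod_seg d sigma (l 0) y ->
  0 <= t -> t + 1 <= d (l 0) y -> 0 < eta <= 1 -> 4 * d (sigma 1) (l (-1)) <= eta ->
  0 <= M -> 2 * eta * t ^ 2 <= M ^ 2 ->
  d (rho t) (tau t) <= M.
Proof.
  intros Hl Hrho Hy Has Htau Hsigma Ht Hfar Heta Hback HM HetaM.
  destruct (asymptotic_nonneg_bound Hm rho l Has) as [B [HB0 HB]].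
  set (a := d (l 0) y) in *.
  apply Rle_plus_epsilon. intros eps He.
  (* The segment from y to a far point l s is a proxy for the ray rho. *)
  destruct (ratio_eventually_small t (2 * B) eps (t + B + 2) Ht ltac:(lra) He)
    as [s [Hs [_ Hsmall]]].
  destruct (proj1 (proj2 HX) y (l s)) as [gam Hgam].
  destruct (geod_ray_seg rho s Hrho ltac:(lra)) as [Srho Drho]. rewrite Hy in Srho, Drho.
  destruct (geod_ray_seg l s (geod_line_ray l Hl) ltac:(lra)) as [_ Dl].
  assert (Hys : s - B <= d y (l s)).
  { pose proof (dist_triangle Hm y (l s) (rho s)) as Htri. pose proof (HB s ltac:(lra)).
    rewrite (dist_sym Hm (l s)) in Htri. lra. }
  assert (Hrho_gam : d (rho t) (gam t) < eps).
  { pose proof (geod_segs_close_near_start _ _ _ rho gam t Srho Hgam) as C.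
    rewrite Drho in C. specialize (C ltac:(lra) ltac:(lra)).
    pose proof (HB s ltac:(lra)).
    assert (0 <= t / s) by (apply Rle_mult_inv_pos; lra).
    nra. }
  pose proof (dist_to_line_ge_of_backtrack l y sigma 1 s Hl Hsigma ltac:(lra) ltac:(fold a; lra)
                ltac:(lra)) as Haligned.
  fold a in Haligned. replace (- (1)) with (-1) in Haligned by ring.
  assert (Ha0 : 0 <= a) by apply (dist_ge0 Hm).
  assert (Hal : a + s - eta * a <= d y (l s)).
  { replace (4 * a * d (sigma 1) (l (-1)) / 1) with (a * (4 * d (sigma 1) (l (-1))))
      in Haligned by field.
    nra. }
  pose proof (geod_segs_close_of_almost_aligned y (l 0) (l s) tau gam t eta Htau Hgam) as C.
  rewrite (dist_sym Hm y (l 0)), Dl in C. fold a in C.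
  specialize (C ltac:(lra) ltac:(lra) ltac:(lra) ltac:(lra) ltac:(lra) Hal).
  pose proof (dist_ge0 Hm (tau t) (gam t)).
  pose proof (dist_triangle Hm (rho t) (gam t) (tau t)) as Htri.
  rewrite (dist_sym Hm (gam t)) in Htri. nra.
Qed.

Lemma tends_to_ray_change_base x x0 z zeta c :
  tends_to_ray d x z zeta -> geod_ray d c -> c 0 = x0 -> asymptotic d c zeta ->
  tends_to_ray d x0 z c.
Proof.
  intros [Hdiv Hconv] Hc Hc0 Has.
  destruct (asymptotic_nonneg_bound Hm c zeta Has) as [B [HB0 HB]].
  set (delta := d x x0). assert (Hdelta : 0 <= delta) by apply (dist_ge0 Hm).
  assert (Hshift : forall n, d x (z n) - delta <= d x0 (z n)).
  { intro n. pose proof (dist_triangle Hm x x0 (z n)) as Htri. fold delta in Htri. lra. }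
  split; [exact (diverges_lower_bound _ _ delta Hdiv Hshift)|].
  intros t eps Ht He.
  destruct (ratio_eventually_small t (B + 1 + 2 * delta) eps t Ht ltac:(lra) He)
    as [T [HtT [HT Hsmall]]].
  destruct (Hconv T 1 ltac:(lra) ltac:(lra)) as [N1 HN1].
  destruct (Hdiv (T + delta)) as [N2 HN2].
  exists (N1 + N2)%nat. intros n Hn mu Hmu.
  specialize (HN2 n ltac:(lia)). pose proof (Hshift n).
  destruct (proj1 (proj2 HX) x (z n)) as [sig Hsig].
  assert (HcmuT : d (c T) (mu T) <= B + 1 + 2 * delta).
  { pose proof (HN1 n ltac:(lia) sig Hsig) as Hsig_zeta.
    pose proof (geod_segs_common_end_close x x0 (z n) sig mu T Hsig Hmu ltac:(lra) ltac:(lra))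
      as Hsig_mu.
    pose proof (HB T ltac:(lra)).
    pose proof (dist_triangle Hm (c T) (zeta T) (mu T)).
    pose proof (dist_triangle Hm (zeta T) (sig T) (mu T)) as Hzeta_mu.
    rewrite (dist_sym Hm (zeta T) (sig T)) in Hzeta_mu. fold delta in Hsig_mu. lra. }
  destruct (geod_ray_seg c T Hc ltac:(lra)) as [Sc Dc]. rewrite Hc0 in Sc, Dc.
  pose proof (geod_segs_dist_scale _ _ _ c mu t T Sc Hmu ltac:(lra) ltac:(lra) ltac:(lra)).
  assert (0 <= t / T) by (apply Rle_mult_inv_pos; lra).
  rewrite (dist_sym Hm). nra.
Qed.

Lemma tends_to_ray_perturb x0 z w c D :
  tends_to_ray d x0 z c -> (forall n, d (z n) (w n) <= D) -> tends_to_ray d x0 w c.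
Proof.
  intros [Hdiv Hconv] HD.
  assert (HD0 : 0 <= D) by (pose proof (HD O); pose proof (dist_ge0 Hm (z O) (w O)); lra).
  assert (Hshift : forall n, d x0 (z n) - D <= d x0 (w n)).
  { intro n. pose proof (dist_triangle Hm x0 (w n) (z n)) as Htri. pose proof (HD n).
    rewrite (dist_sym Hm (w n)) in Htri. lra. }
  split; [exact (diverges_lower_bound _ _ D Hdiv Hshift)|].
  intros t eps Ht He.
  destruct (ratio_eventually_small t (2 * D) (eps / 2) (t + D) Ht ltac:(lra) ltac:(lra))
    as [T [HtT [HT Hsmall]]].
  destruct (Hconv t (eps / 2) Ht ltac:(lra)) as [N1 HN1].
  destruct (Hdiv T) as [N2 HN2].
  exists (N1 + N2)%nat. intros n Hn tau Htau.
  specialize (HN2 n ltac:(lia)). pose proof (Hshift n).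
  destruct (proj1 (proj2 HX) x0 (z n)) as [mu Hmu].
  pose proof (HN1 n ltac:(lia) mu Hmu).
  pose proof (geod_segs_close_near_start _ _ _ mu tau t Hmu Htau ltac:(lra) ltac:(lra)).
  assert (Hratio : t / d x0 (z n) <= t / T).
  { apply Rmult_le_compat_l; [lra|]. apply Rinv_le_contravar; lra. }
  assert (0 <= t / d x0 (z n)) by (apply Rle_mult_inv_pos; lra).
  assert (2 * (t / d x0 (z n)) * d (z n) (w n) <= t / T * (2 * D)).
  { pose proof (HD n). pose proof (dist_ge0 Hm (z n) (w n)). nra. }
  pose proof (dist_triangle Hm (tau t) (mu t) (c t)) as Htri.
  rewrite (dist_sym Hm (tau t) (mu t)) in Htri. lra.
Qed.

Lemma exists_subseq_tends_to_ray (Hprop : proper_space d) x (z : nat -> X) :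
  diverges (fun n => d x (z n)) ->
  exists phi zeta, strictly_increasing phi /\ geod_ray d zeta /\
    tends_to_ray d x (fun n => z (phi n)) zeta.
Proof.
  intros Hdiv.
  destruct (choice (fun n s => geod_seg d s x (z n)) (fun n => proj1 (proj2 HX) x (z n)))
    as [s Hs].
  destruct (proper_diagonal_subseq Hm Hprop x INR (fun k n => s n (Rmin (INR k) (d x (z n)))))
    as [phi [Hphi Hlim]].
  { intros k n. rewrite (geod_seg_dist_start Hm _ x (z n)); [apply Rmin_l|apply Hs|].
    split; [apply Rmin_glb; [apply pos_INR|apply (dist_ge0 Hm)]|apply Rmin_r]. }
  pose proof (diverges_subseq _ phi Hphi Hdiv) as Hdiv'. cbv beta in Hdiv'.
  assert (Hcauchy : forall t, 0 <= t -> cauchy d (fun n => s (phi n) t)).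
  { intros t Ht eps He.
    destruct (INR_unbounded t) as [k Hk].
    destruct (Hlim k) as [L HL]. destruct (converges_cauchy Hm _ _ HL eps He) as [N1 HN1].
    destruct (Hdiv' (INR k)) as [N2 HN2].
    exists (N1 + N2)%nat. intros m n Hmn Hn.
    specialize (HN1 m n ltac:(lia) ltac:(lia)). cbv beta in HN1.
    rewrite !Rmin_left in HN1 by (apply HN2; lia).
    pose proof (geod_segs_dist_mono _ _ _ _ _ t (INR k) (Hs (phi m)) (Hs (phi n)) ltac:(lra)
                  (HN2 m ltac:(lia)) (HN2 n ltac:(lia))).
    lra. }
  assert (Hex : forall t, exists y, 0 <= t -> converges d (fun n => s (phi n) t) y).
  { intro t. destruct (Rle_or_lt 0 t) as [Ht|Ht].
    - destruct (proper_cauchy_converges Hm Hprop _ (Hcauchy t Ht)) as [y Hy]. exists y. auto.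
    - exists x. intro. lra. }
  destruct (choice _ Hex) as [zeta Hzeta].
  exists phi, zeta. split; [exact Hphi|split].
  - intros a b Ha Hb.
    apply (converges_dist_eventually_const Hm _ _ _ _ _ (Hzeta a Ha) (Hzeta b Hb)).
    destruct (Hdiv' (Rmax a b)) as [N HN]. exists N. intros n Hn.
    pose proof (HN n Hn). pose proof (Rmax_l a b). pose proof (Rmax_r a b).
    apply (geod_seg_dist _ x (z (phi n))); [apply Hs|lra|lra].
  - split; [exact Hdiv'|]. intros t eps Ht He.
    destruct (Hzeta t Ht eps He) as [N1 HN1]. destruct (Hdiv' t) as [N2 HN2].
    exists (N1 + N2)%nat. intros n Hn s' Hs'.
    rewrite (geod_seg_unique _ _ s' (s (phi n)) t Hs' (Hs _)) by (split; [lra|apply HN2; lia]).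
    apply HN1. lia.
Qed.

Lemma isometries_attract_visibility_pts (f finv : nat -> X -> X)
  (Hf : forall n a b, d (f n a) (f n b) = d a b)
  (Hfinv : forall n a, finv n (f n a) = a) (Hffinv : forall n a, f n (finv n a) = a)
  x xip xim :
  tends_to_ray d x (fun n => f n x) xip -> tends_to_ray d x (fun n => finv n x) xim ->
  geod_ray d xim ->
  forall xi, visibility_pt d xi -> ~ asymptotic d xi xim ->
    vis_conv d (fun n s => f n (xi s)) xip.
Proof.
  intros Hplus Hminus Hxim xi Hvis Hna.
  assert (Hfinv_iso : forall n a b, d (finv n a) (finv n b) = d a b)
    by (intros n a b; rewrite <- (Hf n), !Hffinv; reflexivity).
  destruct (Hvis xim Hxim (fun H => Hna (asymptotic_sym Hm _ _ H))) as [l [Hl [Hl_xi Hl_xim]]].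
  intros x0 t eps Ht He.
  destruct (classic (exists c0, geod_ray d c0 /\ c0 0 = x0 /\ asymptotic d c0 xip))
    as [[c0 [Hc0 [Hc00 Hc0_xip]]]|Hno].
  2:{ exists O. intros n _ c c' _ _ _ Hc' Hc'0 Hc'_xip. exfalso. apply Hno. exists c'. auto. }
  assert (Hforward : tends_to_ray d x0 (fun n => f n (l 0)) c0).
  { apply (tends_to_ray_perturb _ (fun n => f n x) _ _ (d x (l 0)));
      [|intro n; rewrite Hf; lra].
    exact (tends_to_ray_change_base x x0 _ xip c0 Hplus Hc0 Hc00 Hc0_xip). }
  assert (Hbackward : tends_to_ray d (l 0) (fun n => finv n x0) (fun s => l (- s))).
  { apply (tends_to_ray_perturb _ (fun n => finv n x) _ _ (d x x0));
      [|intro n; rewrite Hfinv_iso; lra].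
    apply (tends_to_ray_change_base x (l 0) _ xim _ Hminus (geod_line_neg_ray l Hl));
      [now rewrite Ropp_0|exact Hl_xim]. }
  set (eta := Rmin 1 ((eps / 2) ^ 2 / (2 * t ^ 2 + 1))).
  assert (Heta : 0 < eta <= 1 /\ 2 * eta * t ^ 2 <= (eps / 2) ^ 2).
  { assert (Hq : 0 < (eps / 2) ^ 2 / (2 * t ^ 2 + 1))
      by (apply Rdiv_lt_0_compat; [apply pow_lt|]; nra).
    split; [split; [apply Rmin_glb_lt; lra|apply Rmin_l]|].
    apply Rle_trans with (2 * ((eps / 2) ^ 2 / (2 * t ^ 2 + 1)) * t ^ 2).
    - apply Rmult_le_compat_r; [nra|]. apply Rmult_le_compat_l; [lra|apply Rmin_r].
    - apply (Rmult_le_reg_r (2 * t ^ 2 + 1)); [nra|].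
      replace (2 * ((eps / 2) ^ 2 / (2 * t ^ 2 + 1)) * t ^ 2 * (2 * t ^ 2 + 1))
        with (2 * t ^ 2 * (eps / 2) ^ 2) by (field; nra).
      nra. }
  destruct (proj2 Hforward t (eps / 2) Ht ltac:(lra)) as [N1 HN1].
  destruct (proj2 Hbackward 1 (eta / 4) ltac:(lra) ltac:(lra)) as [N2 HN2].
  destruct (proj1 Hbackward (t + 1)) as [N3 HN3].
  exists (N1 + N2 + N3)%nat. intros n Hn c c' Hc Hc_x0 Hc_xi Hc' Hc'_x0 Hc'_xip.
  rewrite (geod_rays_asymptotic_eq c' c0 t Hc' Hc0) by
    (try congruence; exact (asymptotic_trans Hm _ _ _ Hc'_xip (asymptotic_sym Hm _ _ Hc0_xip))).
  destruct (proj1 (proj2 HX) x0 (f n (l 0))) as [tau Htau].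
  destruct (proj1 (proj2 HX) (l 0) (finv n x0)) as [sigma Hsigma].
  (* Pulled back by f n, the ray c comes in from the direction of xi and the segment
     tau from far out along the backward half of l. *)
  assert (Hct : d (c t) (tau t) <= eps / 2).
  { rewrite <- (Hfinv_iso n).
    apply (ray_close_to_segment_of_backtrack l (finv n x0) _ (fun s => finv n (tau s)) sigma t eta
             _ Hl
             (geod_ray_isometry (finv n) (Hfinv_iso n) c Hc)); try lra.
    - rewrite Hc_x0. reflexivity.
    - apply (asymptotic_trans Hm _ xi); [|exact (asymptotic_sym Hm _ _ Hl_xi)].
      destruct Hc_xi as [B HB]. exists B. intros s Hs.
      rewrite <- (Hf n), Hffinv. exact (HB s Hs).
    - pose proof (geod_seg_isometry (finv n) (Hfinv_iso n) _ _ _ Htau) as Hseg.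
      rewrite Hfinv in Hseg. exact Hseg.
    - exact Hsigma.
    - apply HN3. lia.
    - pose proof (HN2 n ltac:(lia) sigma Hsigma) as Hback.
      replace (- (1)) with (-1) in Hback by ring. lra. }
  pose proof (HN1 n ltac:(lia) tau Htau).
  pose proof (dist_triangle Hm (c t) (tau t) (c0 t)). lra.
Qed.

End CAT0.

Section Action.
Context {G X : Type} {mul : G -> G -> G} {e : G} {inv : G -> G} {d : X -> X -> R}
  {act : G -> X -> X} (HG : is_group mul e inv) (Hact : isometric_action mul e d act).

Lemma act_invK h z : act (inv h) (act h z) = z.
Proof.
  destruct Hact as [Hae [Hamul _]]. rewrite <- Hamul, (proj1 (proj2 (proj2 HG) h)). apply Hae.
Qed.

Lemma act_Kinv h z : act h (act (inv h) z) = z.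
Proof.
  destruct Hact as [Hae [Hamul _]]. rewrite <- Hamul, (proj2 (proj2 (proj2 HG) h)). apply Hae.
Qed.

End Action.

Lemma escapes_compacts_orbit_diverges {G X} (d : X -> X -> R) (act : G -> X -> X) g :
  proper_space d -> escapes_compacts d act g -> exists x, diverges (fun n => d x (act (g n) x)).
Proof.
  intros Hprop [x Hx]. exists x. intro M. destruct (Hx _ (Hprop x M)) as [N HN].
  exists N. intros n Hn. apply Rnot_lt_le. intro Hlt. apply (HN n Hn). lra.
Qed.

Theorem lemma2p8 (X : Type) (d : X -> X -> R)
  (HX : CAT0_space d) (Hprop : proper_space d)
  (G : Type) (mul : G -> G -> G) (e : G) (inv : G -> G)
  (HG : is_group mul e inv) (act : G -> X -> X)
  (Hact : isometric_action mul e d act)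
  (g : nat -> G) (Hesc : escapes_compacts d act g) :
  exists (sigma : nat -> nat) (xim xip : R -> X),
    (forall n, (sigma n < sigma (S n))%nat) /\
    geod_ray d xim /\ geod_ray d xip /\
    forall xi, geod_ray d xi -> visibility_pt d xi -> ~ asymptotic d xi xim ->
      vis_conv d (fun n t => act (g (sigma n)) (xi t)) xip.
Proof.
  pose proof (proj2 (proj2 Hact)) as Hiso.
  destruct (escapes_compacts_orbit_diverges d act g Hprop Hesc) as [x Hdiv].
  destruct (exists_subseq_tends_to_ray HX Hprop x _ Hdiv) as [phi1 [xip [Hphi1 [Hxip Hplus]]]].
  assert (Hdiv_inv : diverges (fun n => d x (act (inv (g (phi1 n))) x))).
  { apply (diverges_lower_bound _ _ 0 (proj1 Hplus)). intro n.
    rewrite <- (Hiso (g (phi1 n)) x (act (inv (g (phi1 n))) x)), (act_Kinv HG Hact).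
    rewrite (dist_sym (proj1 HX)). lra. }
  destruct (exists_subseq_tends_to_ray HX Hprop x _ Hdiv_inv)
    as [phi2 [xim [Hphi2 [Hxim Hminus]]]].
  exists (fun n => phi1 (phi2 n)), xim, xip.
  split; [exact (strictly_increasing_comp _ _ Hphi1 Hphi2)|].
  split; [exact Hxim|split; [exact Hxip|]].
  intros xi _.
  apply (isometries_attract_visibility_pts HX (fun n => act (g (phi1 (phi2 n))))
           (fun n => act (inv (g (phi1 (phi2 n))))) (fun n => Hiso _)
           (fun n => act_invK HG Hact _) (fun n => act_Kinv HG Hact _) x xip xim
           (tends_to_ray_subseq d x _ xip phi2 Hphi2 Hplus) Hminus Hxim).
Qed.
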